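(* Let $G=(V,E,w)$ be a star graph with nonnegative edge weights. Then \[ \|H_G\|\leq \max_{e\in E} w_e+\sum_{e\in E} w_e. \]
   Context: A star graph is a complete bipartite graph $K_{1,m}$: one center vertex adjacent to all other vertices, with no other edges. Qubits are placed on the vertices; with Pauli operators $X_i,Y_i,Z_i$ on qubit $i$, define $h_{ij}=\frac12(I-X_iX_j-Y_iY_j-Z_iZ_j)$ and $H_G=\sum_{\{i,j\}\in E} w_{ij}h_{ij}$; $\|\cdot\|$ denotes the operator norm. *)

From HB Require Import structures.
From mathcomp Require Import all_boot all_order all_algebra algC.
Set Implicit Arguments. Unset Strict Implicit. Unset Printing Implicit Defensive.
Import Order.TTheory GRing.Theory Num.Theory.
Local Open Scope ring_scope.

(* Computational basis states of n qubits: bit strings indexed by 'I_n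
   (false = |0>, true = |1>). *)
Definition bstate (n : nat) := {ffun 'I_n -> bool}.

(* Operators on (C^2)^{\otimes n}, given by their matrix entries <x|A|y>. *)
Definition qop (n : nat) := bstate n -> bstate n -> algC.

Definition pauliX (a b : bool) : algC := if a != b then 1 else 0.
Definition pauliY (a b : bool) : algC :=
  if a == b then 0 else if b then - 'i else 'i.
Definition pauliZ (a b : bool) : algC :=
  if a == b then (if a then -1 else 1) else 0.

Definition qid (n : nat) : qop n := fun x y => (x == y)%:R.

Definition pauli2 (n : nat) (P : bool -> bool -> algC) (i j : 'I_n) : qop n :=
  fun x y => P (x i) (y i) * P (x j) (y j) *
             \prod_(k < n | (k != i) && (k != j)) ((x k == y k)%:R : algC).

Definition hterm (n : nat) (i j : 'I_n) : qop n :=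
  fun x y => 2^-1 * (qid x y - pauli2 pauliX i j x y
                      - pauli2 pauliY i j x y - pauli2 pauliZ i j x y).

(* A weighted simple graph on vertex set 'I_n: E is the adjacency relation,
   and each edge {i,j} is represented once by the pair i < j, with weight w i j. *)
Definition is_edge (n : nat) (E : rel 'I_n) (i j : 'I_n) : bool := ((i < j)%N) && E i j.

Definition hamiltonian (n : nat) (E : rel 'I_n) (w : 'I_n -> 'I_n -> algC) : qop n :=
  fun x y => \sum_(i < n) \sum_(j < n | is_edge E i j) w i j * hterm i j x y.

Definition simple_graph (n : nat) (E : rel 'I_n) : Prop :=
  (forall i j, E i j = E j i) /\ (forall i, E i i = false).

Definition star_graph (n : nat) (E : rel 'I_n) : Prop :=
  (1 < n)%N /\ exists c : 'I_n, forall i j, E i j = (i != j) && ((i == c) || (j == c)).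

Definition qapply (n : nat) (A : qop n) (v : bstate n -> algC) : bstate n -> algC :=
  fun x => \sum_(y : bstate n) A x y * v y.
Definition vnorm (n : nat) (v : bstate n -> algC) : algC :=
  sqrtC (\sum_(x : bstate n) `|v x| ^+ 2).

Definition opnorm_le (n : nat) (A : qop n) (c : algC) : Prop :=
  forall v : bstate n -> algC, vnorm (qapply A v) <= c * vnorm v.

Definition max_weight (n : nat) (E : rel 'I_n) (w : 'I_n -> 'I_n -> algC) : algC :=
  \big[Num.max/0]_(i < n) \big[Num.max/0]_(j < n | is_edge E i j) w i j.
Definition sum_weight (n : nat) (E : rel 'I_n) (w : 'I_n -> 'I_n -> algC) : algC :=
  \sum_(i < n) \sum_(j < n | is_edge E i j) w i j.

(* On computational basis states h_ij acts as I - S_ij, where S_ij swaps qubits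
   i and j, so for a star with centre c we have H = sum_a w_a (I - S_a), S_a being
   the swap of c with the leaf a.  Put D_a = <(I - S_a) v, v> >= 0; then
   |(I - S_a) v|^2 = 2 D_a.  For leaves a <> b the antisymmetriser of the three
   qubits c, a, b vanishes (among three bits two coincide), i.e.
   I + S_a S_b + S_b S_a = S_a + S_b + S_ab, whence
   2 Re <(I - S_a) v, (I - S_b) v> = D_a + D_b - D_ab <= D_a + D_b.
   Expanding |Hv|^2 and bounding the diagonal terms with max w gives
   |Hv|^2 <= K <Hv, v> for K = max w + sum w, and then
   0 <= |K v - H v|^2 <= K^2 |v|^2 - |Hv|^2. *)

From mathcomp Require Import all_boot all_order all_algebra algC ring.
Import Order.TTheory GRing.Theory Num.Theory.
Local Open Scope ring_scope.

Lemma sum_weighted_sym (R : comPzRingType) (I : finType) (P : pred I)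
    (a : I -> R) (G : I -> I -> R) :
  2 * \sum_(p | P p) \sum_(q | P q) a p * a q * G p q
  = \sum_(p | P p) \sum_(q | P q) a p * a q * (G p q + G q p).
Proof.
rewrite mulr2n mulrDl !mul1r [X in _ + X]exchange_big -big_split /=.
apply: eq_bigr => p _; rewrite -big_split /=.
by apply: eq_bigr => q _; rewrite mulrDr [a q * a p]mulrC.
Qed.

Lemma weighted_gram_le (R : numDomainType) (I : finType) (P : pred I)
    (a : I -> R) (G : I -> I -> R) (D : I -> R) (M : R) :
  (forall p, P p -> 0 <= a p <= M) ->
  (forall p, P p -> 0 <= D p) ->
  (forall p, P p -> G p p = 2 * D p) ->
  (forall p q, P p -> P q -> p != q -> G p q + G q p <= D p + D q) ->
  \sum_(p | P p) \sum_(q | P q) a p * a q * G p q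
  <= (M + \sum_(p | P p) a p) * \sum_(p | P p) a p * D p.
Proof.
move=> aM D0 Gdiag Goff.
set W := \sum_(p | P p) a p; set S := \sum_(p | P p) a p * D p.
have a0 p : P p -> 0 <= a p by move=> Pp; case/andP: (aM p Pp).
(* Only the diagonal exceeds the bound D p + D q, by 2 a_p^2 D_p: this excess is
   what the term M pays for. *)
have bound p q : P p -> P q ->
    a p * a q * (G p q + G q p)
    <= a p * a q * (D p + D q) + (p == q)%:R * (2 * (a p * a p * D p)).
  move=> Pp Pq; have [<-|pq] := eqVneq p q.
    by rewrite Gdiag // mulr1n le_eqVlt; apply/predU1l; ring.
  by rewrite mulr0n mul0r addr0 ler_wpM2l ?Goff // mulr_ge0 ?a0.
have cross : \sum_(p | P p) \sum_(q | P q) a p * a q * (D p + D q) = 2 * (W * S).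
  transitivity (\sum_(p | P p) (a p * D p * W + a p * S)).
    apply: eq_bigr => p _; rewrite /W /S !mulr_sumr -big_split /=.
    by apply: eq_bigr => q _; ring.
  by rewrite big_split /= -mulr_suml -mulr_suml -/S -/W; ring.
have diag : \sum_(p | P p) \sum_(q | P q) (p == q)%:R * (2 * (a p * a p * D p))
            = 2 * \sum_(p | P p) a p * a p * D p.
  rewrite mulr_sumr; apply: eq_bigr => p Pp.
  rewrite (bigD1 p) //= eqxx mul1r big1 ?addr0 // => q /andP[_ qp].
  by rewrite eq_sym (negbTE qp) mul0r.
have diag_le : \sum_(p | P p) a p * a p * D p <= M * S.
  rewrite /S mulr_sumr; apply: ler_sum => p Pp; rewrite -mulrA.
  by case/andP: (aM p Pp) => _ apM; rewrite ler_wpM2r // mulr_ge0 ?a0 ?D0.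
rewrite -(ler_pM2l (ltr0n R 2)) sum_weighted_sym.
have -> : 2 * ((M + W) * S) = 2 * (W * S) + 2 * (M * S) by ring.
apply: le_trans
  (_ : _ <= 2 * (W * S) + 2 * \sum_(p | P p) a p * a p * D p) _; last first.
  by rewrite lerD2l ler_pM2l ?ltr0n.
rewrite -cross -diag -big_split /= ler_sum // => p Pp.
by rewrite -big_split /= ler_sum // => q Pq; apply: bound.
Qed.

Lemma bigmax_ge0 {R : numDomainType} {I : Type} {r : seq I} {P : pred I}
    {F : I -> R} :
  (forall i, P i -> 0 <= F i) -> 0 <= \big[Num.max/0]_(i <- r | P i) F i.
Proof.
move=> F0; apply: (big_ind (fun x => 0 <= x)) => // x y x0 y0.
by rewrite comparable_le_max ?x0 // real_comparable ?ger0_real.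
Qed.

Lemma le_bigmax_ge0 {R : numDomainType} {I : eqType} {r : seq I} {P : pred I}
    {F : I -> R} {j} :
  (forall i, P i -> 0 <= F i) -> j \in r -> P j ->
  F j <= \big[Num.max/0]_(i <- r | P i) F i.
Proof.
move=> F0; elim: r => // i r IH; rewrite in_cons big_cons => /orP[/eqP<-|jr] Pj.
  by rewrite Pj comparable_le_max ?lexx // real_comparable ?ger0_real ?F0 ?bigmax_ge0.
case: ifP => Pi; last exact: IH.
by rewrite comparable_le_max ?IH ?orbT // real_comparable ?ger0_real ?F0 ?bigmax_ge0.
Qed.

Section InnerProduct.
Context {C : numClosedFieldType} {T : finType}.
Implicit Types (u v : T -> C) (s : T -> T).

Definition dotv u v : C := \sum_x u x * (v x)^*.

Definition vdiff s v x : C := v x - v (s x).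

Lemma conj_dotv u v : (dotv u v)^* = dotv v u.
Proof.
by rewrite rmorph_sum; apply: eq_bigr => x _; rewrite rmorphM /= conjCK mulrC.
Qed.

Lemma dotv_ge0 v : 0 <= dotv v v.
Proof. by apply: sumr_ge0 => x _; rewrite -normCK exprn_ge0. Qed.

Lemma eq_dotv {u1 u2 v1 v2} : u1 =1 u2 -> v1 =1 v2 -> dotv u1 v1 = dotv u2 v2.
Proof. by move=> eq_u eq_v; apply: eq_bigr => x _; rewrite eq_u eq_v. Qed.

Lemma dotvBl u1 u2 v :
  dotv (fun x => u1 x - u2 x) v = dotv u1 v - dotv u2 v.
Proof. by rewrite -sumrB; apply: eq_bigr => x _; rewrite mulrBl. Qed.

Lemma dotvBr u v1 v2 :
  dotv u (fun x => v1 x - v2 x) = dotv u v1 - dotv u v2.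
Proof. by rewrite -conj_dotv dotvBl rmorphB /= !conj_dotv. Qed.

Lemma dotv_suml (I : finType) (P : pred I) (a : I -> C) (f : I -> T -> C) v :
  dotv (fun x => \sum_(p | P p) a p * f p x) v
  = \sum_(p | P p) a p * dotv (f p) v.
Proof.
rewrite /dotv; under eq_bigr do rewrite mulr_suml.
rewrite exchange_big; apply: eq_bigr => p _; rewrite mulr_sumr.
by apply: eq_bigr => x _; rewrite mulrA.
Qed.

Lemma dotv_sumr (I : finType) (P : pred I) (a : I -> C) (f : I -> T -> C) u :
  dotv u (fun x => \sum_(p | P p) a p * f p x)
  = \sum_(p | P p) (a p)^* * dotv u (f p).
Proof.
rewrite -conj_dotv dotv_suml rmorph_sum; apply: eq_bigr => p _.
by rewrite rmorphM /= conj_dotv.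
Qed.

Lemma dotv_comp_invol v f g : involutive g ->
  dotv (v \o f) (v \o g) = dotv (v \o (f \o g)) v.
Proof.
move=> gK; rewrite /dotv (reindex_inj (can_inj gK)).
by apply: eq_bigr => x _ /=; rewrite gK.
Qed.

Section Involution.
Variables (v : T -> C) (s : T -> T).
Hypothesis sK : involutive s.

Lemma dotv_compC : dotv (v \o s) v = dotv v (v \o s).
Proof. exact: esym (dotv_comp_invol v id s sK). Qed.

Lemma dotv_vdiff_self :
  dotv (vdiff s v) (vdiff s v) = 2 * dotv (vdiff s v) v.
Proof.
have dotv_ss : dotv (v \o s) (v \o s) = dotv v v.
  by rewrite /dotv [RHS](reindex_inj (can_inj sK)).
rewrite !dotvBl !dotvBr dotv_ss -dotv_compC; ring.
Qed.

Lemma dotv_vdiff_ge0 : 0 <= dotv (vdiff s v) v.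
Proof. by rewrite -(pmulr_rge0 _ (ltr0n _ 2)) -dotv_vdiff_self dotv_ge0. Qed.

End Involution.

Section ThreeCycle.
Variables (v : T -> C) (f g h : T -> T).
Hypotheses (fK : involutive f) (gK : involutive g) (hK : involutive h).
Hypothesis cycle3 :
  forall x, v (f (g x)) + v (g (f x)) + v x = v (f x) + v (g x) + v (h x).

Lemma dotv_vdiff_cross :
  dotv (vdiff f v) (vdiff g v) + dotv (vdiff g v) (vdiff f v)
  = dotv (vdiff f v) v + dotv (vdiff g v) v - dotv (vdiff h v) v.
Proof.
have fgh : dotv (v \o (f \o g)) v + dotv (v \o (g \o f)) v
           = dotv (v \o f) v + dotv (v \o g) v + dotv (v \o h) v - dotv v v.
  rewrite /dotv -!big_split -sumrB /=; apply: eq_bigr => x _.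
  by rewrite -!mulrDl -mulrBl -cycle3 addrK.
rewrite !dotvBl !dotvBr -(dotv_compC _ _ gK) -(dotv_compC _ _ fK).
rewrite (dotv_comp_invol v f g gK) (dotv_comp_invol v g f fK).
by rewrite -[dotv (v \o (g \o f)) v](addKr (dotv (v \o (f \o g)) v)) fgh; ring.
Qed.

Lemma dotv_vdiff_cross_le :
  dotv (vdiff f v) (vdiff g v) + dotv (vdiff g v) (vdiff f v)
  <= dotv (vdiff f v) v + dotv (vdiff g v) v.
Proof. by rewrite dotv_vdiff_cross gerBl dotv_vdiff_ge0. Qed.

End ThreeCycle.

Definition vdiff_sum {I : finType} (P : pred I) (a : I -> C) (s : I -> T -> T) v x :=
  \sum_(p | P p) a p * vdiff (s p) v x.

Lemma dotv_weighted_vdiff_le (I : finType) (P : pred I) (a : I -> C) (M : C)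
    (s : I -> T -> T) (v : T -> C) :
  (forall p, P p -> 0 <= a p <= M) ->
  (forall p, involutive (s p)) ->
  (forall p q, P p -> P q -> p != q -> exists2 h, involutive h &
     forall x, v (s p (s q x)) + v (s q (s p x)) + v x
               = v (s p x) + v (s q x) + v (h x)) ->
  dotv (vdiff_sum P a s v) (vdiff_sum P a s v)
  <= (M + \sum_(p | P p) a p) * dotv (vdiff_sum P a s v) v.
Proof.
move=> aM sK cycle3; set u := vdiff_sum P a s v.
have a_real p : P p -> (a p)^* = a p.
  by move=> Pp; case/andP: (aM p Pp) => a0 _; apply/CrealP/ger0_real.
have -> : dotv u u = \sum_(p | P p) \sum_(q | P q)
                       a p * a q * dotv (vdiff (s p) v) (vdiff (s q) v).
  rewrite /u dotv_suml; apply: eq_bigr => p _; rewrite dotv_sumr mulr_sumr.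
  by apply: eq_bigr => q Pq; rewrite a_real // mulrA.
rewrite dotv_suml; apply: weighted_gram_le => // [p _|p _|p q Pp Pq pq].
- exact: dotv_vdiff_ge0.
- exact: dotv_vdiff_self.
- by have [h hK cyc] := cycle3 p q Pp Pq pq; apply: dotv_vdiff_cross_le hK cyc.
Qed.

Lemma dotv_le_sqr (u v : T -> C) (K : C) :
  0 <= K -> dotv u u <= K * dotv u v -> dotv u u <= K ^+ 2 * dotv v v.
Proof.
move=> K0 le_uK.
have K_real : K^* = K by apply/CrealP/ger0_real.
have Kuv_real : (K * dotv u v)^* = K * dotv u v.
  by apply/CrealP/ger0_real/(le_trans (dotv_ge0 u)).
have expand : dotv (fun x => K * v x - u x) (fun x => K * v x - u x)
              = K ^+ 2 * dotv v v - K * dotv u v - (K * dotv u v)^* + dotv u u.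
  rewrite rmorphM /= K_real conj_dotv /dotv !mulr_sumr -!sumrB -big_split /=.
  by apply: eq_bigr => x _; rewrite rmorphB rmorphM /= K_real; ring.
have := dotv_ge0 (fun x => K * v x - u x); rewrite expand Kuv_real => ge0.
rewrite -subr_ge0.
have -> : K ^+ 2 * dotv v v - dotv u u
          = (K ^+ 2 * dotv v v - K * dotv u v - K * dotv u v + dotv u u)
            + 2 * (K * dotv u v - dotv u u) by ring.
by rewrite addr_ge0 // mulr_ge0 // subr_ge0.
Qed.

End InnerProduct.

Section QubitSwap.
Context {n : nat}.
Implicit Types (i j k : 'I_n) (x y : bstate n).

Definition qswap i j x : bstate n :=
  [ffun k => if k == i then x j else if k == j then x i else x k].

Lemma qswapK i j : involutive (qswap i j).
Proof.
by move=> x; apply/ffunP => k; rewrite !ffunE; do ![case: eqP => //= ?; subst].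
Qed.

Lemma qswapC i j x : qswap i j x = qswap j i x.
Proof. by apply/ffunP => k; rewrite !ffunE; do ![case: eqP => //= ?; subst]. Qed.

Lemma qswap_id {i j x} : x i = x j -> qswap i j x = x.
Proof.
by move=> xij; apply/ffunP => k; rewrite !ffunE; do ![case: eqP => //= ?; subst].
Qed.

Lemma qswap_qswap_eq_ca {c a b x} : c != a -> c != b -> a != b ->
  x c = x a -> qswap c a (qswap c b x) = qswap a b x.
Proof.
move=> ca cb ab xca; apply/ffunP => k; rewrite !ffunE.
by move: ca cb ab; do ![case: eqP => //= ?; subst].
Qed.

Lemma qswap_qswap_eq_ab {c a b x} : c != a -> c != b -> a != b ->
  x a = x b -> qswap c a (qswap c b x) = qswap c b x.
Proof.
move=> ca cb ab xab; apply/ffunP => k; rewrite !ffunE.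
by move: ca cb ab; do ![case: eqP => //= ?; subst].
Qed.

Lemma qswap_cycle3 (C : zmodType) (v : bstate n -> C) c a b x :
  c != a -> c != b -> a != b ->
  v (qswap c a (qswap c b x)) + v (qswap c b (qswap c a x)) + v x
  = v (qswap c a x) + v (qswap c b x) + v (qswap a b x).
Proof.
move=> ca cb ab; have ba : b != a by rewrite eq_sym.
have [xca|xcb|xab] : [\/ x c = x a, x c = x b | x a = x b].
- by case: (x c); case: (x a); case: (x b); constructor.
- rewrite (qswap_qswap_eq_ca ca cb ab xca) (qswap_id xca).
  by rewrite addrC (addrC (v (qswap a b x))) addrA.
- rewrite (qswap_id xcb) (qswap_qswap_eq_ca cb ca ba xcb) (qswapC b a).
  by rewrite addrAC.
- rewrite (qswap_id xab) (qswap_qswap_eq_ab ca cb ab xab).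
  by rewrite (qswap_qswap_eq_ab cb ca ba (esym xab)) (addrC (v (qswap c b x))).
Qed.

Definition agree_off i j x y : bool :=
  [forall k, (k != i) && (k != j) ==> (x k == y k)].

Lemma prod_agree_off i j x y :
  \prod_(k < n | (k != i) && (k != j)) ((x k == y k)%:R : algC)
  = (agree_off i j x y)%:R.
Proof.
have [/forallP agr | /forallPn[k]] := boolP (agree_off i j x y).
  by apply: big1 => k Pk; move: (agr k); rewrite Pk => /eqP ->; rewrite eqxx.
by rewrite negb_imply => /andP[Pk /negbTE nxy]; rewrite (bigD1 k) //= nxy mul0r.
Qed.

Lemma eq_bstate_off i j x y :
  (x == y) = [&& agree_off i j x y, x i == y i & x j == y j].
Proof.
apply/eqP/and3P => [->|[/forallP agr /eqP xyi /eqP xyj]].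
  by split=> //; apply/forallP => k; rewrite eqxx implybT.
apply/ffunP => k; have [->|ki] := eqVneq k i => //; have [->|kj] := eqVneq k j => //.
by move: (agr k); rewrite ki kj => /eqP.
Qed.

Lemma eq_qswap_off i j x y : i != j ->
  (y == qswap i j x) = [&& agree_off i j x y, y i == x j & y j == x i].
Proof.
move=> ij; have ji : (j == i) = false by rewrite eq_sym (negbTE ij).
apply/eqP/and3P => [->|[/forallP agr /eqP yxi /eqP yxj]].
  rewrite !ffunE ji !eqxx; split=> //.
  apply/forallP => k; apply/implyP => /andP[ki kj].
  by rewrite ffunE (negbTE ki) (negbTE kj).
apply/ffunP => k; rewrite ffunE; have [->|ki] := eqVneq k i => //.
have [->|kj] := eqVneq k j => //.
by move: (agr k); rewrite ki kj eq_sym => /eqP.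
Qed.

End QubitSwap.

Lemma hterm_bits (a b a' b' : bool) :
  2^-1 * (((a == a') && (b == b'))%:R - pauliX a a' * pauliX b b'
          - pauliY a a' * pauliY b b' - pauliZ a a' * pauliZ b b')
  = ((a == a') && (b == b'))%:R - ((a' == b) && (b' == a))%:R :> algC.
Proof.
rewrite /pauliX /pauliY /pauliZ.
by case: a; case: b; case: a'; case: b' => /=;
  rewrite ?mulrNN ?mulNr ?mulrN -?expr2 ?sqrCi; field.
Qed.

Lemma hterm_qswap n (i j : 'I_n) x y : i != j ->
  hterm i j x y = (x == y)%:R - (y == qswap i j x)%:R.
Proof.
move=> ij; rewrite /hterm /qid /pauli2 !prod_agree_off.
rewrite (eq_bstate_off i j) (eq_qswap_off _ _ _ _ ij).
by case: agree_off => /=; rewrite ?mulr1 ?hterm_bits // !mulr0 !subr0 mulr0.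
Qed.

Lemma qapply_hterm n (i j : 'I_n) v x : i != j ->
  qapply (hterm i j) v x = vdiff (qswap i j) v x.
Proof.
move=> ij; rewrite /qapply; under eq_bigr do rewrite hterm_qswap // mulrBl.
rewrite sumrB (bigD1 x) //= eqxx mul1r big1 ?addr0 => [|y /negbTE]; last first.
  by rewrite eq_sym => ->; rewrite mul0r.
rewrite (bigD1 (qswap i j x)) //= eqxx mul1r big1 ?addr0 // => y /negbTE ->.
by rewrite mul0r.
Qed.

Definition edges {n} (E : rel 'I_n) : pred ('I_n * 'I_n) := fun p => is_edge E p.1 p.2.

Lemma qapply_hamiltonian n (E : rel 'I_n) w v x :
  qapply (hamiltonian E w) v x
  = vdiff_sum (edges E) (fun p => w p.1 p.2) (fun p => qswap p.1 p.2) v x.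
Proof.
rewrite /qapply /hamiltonian.
under eq_bigr do rewrite pair_big_dep mulr_suml /=.
rewrite exchange_big; apply: eq_bigr => p /andP[lt_p _].
rewrite -qapply_hterm ?neq_ltn ?lt_p // mulr_sumr.
by under [RHS]eq_bigr do rewrite mulrA.
Qed.

Section WeightBounds.
Variables (n : nat) (E : rel 'I_n) (w : 'I_n -> 'I_n -> algC).
Hypothesis w_ge0 : forall i j, is_edge E i j -> 0 <= w i j.

Lemma max_weight_ge0 : 0 <= max_weight E w.
Proof. by apply: bigmax_ge0 => i _; apply: bigmax_ge0 => j; apply: w_ge0. Qed.

Lemma le_max_weight i j : is_edge E i j -> w i j <= max_weight E w.
Proof.
move=> Eij.
have row_ge0 k : predT k -> 0 <= \big[Num.max/0]_(l < n | is_edge E k l) w k l.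
  by move=> _; apply: bigmax_ge0 => l; apply: w_ge0.
apply: le_trans (le_bigmax_ge0 (w_ge0 i) (mem_index_enum j) Eij) _.
exact: le_bigmax_ge0 row_ge0 (mem_index_enum i) isT.
Qed.

Lemma sum_weightE : sum_weight E w = \sum_(p | edges E p) w p.1 p.2.
Proof. exact: pair_big_dep. Qed.

End WeightBounds.

Definition leaf {n} (c : 'I_n) (p : 'I_n * 'I_n) : 'I_n :=
  if p.1 == c then p.2 else p.1.

Section StarGraph.
Context {n : nat} {E : rel 'I_n} {c : 'I_n}.
Hypothesis starE : forall i j, E i j = (i != j) && ((i == c) || (j == c)).

Lemma star_edgeE {p} : edges E p ->
  p = if (c < leaf c p)%N then (c, leaf c p) else (leaf c p, c).
Proof.
case: p => i j; rewrite /edges /is_edge starE /leaf /=.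
case/and3P=> lt_ij ij /orP[/eqP ic|/eqP jc]; subst; first by rewrite eqxx lt_ij.
by rewrite (negbTE ij) ltnNge ltnW.
Qed.

Lemma star_leaf_neq p : edges E p -> leaf c p != c.
Proof.
move=> Ep; apply/eqP => lpc; have := star_edgeE Ep; rewrite lpc ltnn => pcc.
by move: Ep; rewrite pcc /edges /is_edge ltnn.
Qed.

Lemma star_leaf_inj {p q} : edges E p -> edges E q -> leaf c p = leaf c q -> p = q.
Proof. by move=> Ep Eq lpq; rewrite (star_edgeE Ep) (star_edgeE Eq) lpq. Qed.

Lemma star_qswap p x : edges E p -> qswap p.1 p.2 x = qswap c (leaf c p) x.
Proof.
by move=> Ep; rewrite [in LHS](star_edgeE Ep); case: ifP => _ //=; apply: qswapC.
Qed.

End StarGraph.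

Lemma opnorm_le_dotv n (A : qop n) (K : algC) : 0 <= K ->
  (forall v, dotv (qapply A v) (qapply A v) <= K ^+ 2 * dotv v v) ->
  opnorm_le A K.
Proof.
move=> K0 AK v.
have vnormE u : vnorm u = sqrtC (dotv u u).
  by congr sqrtC; apply: eq_bigr => x _; rewrite normCK.
rewrite !vnormE -(sqrCK K0) -sqrtCM ?nnegrE ?exprn_ge0 ?dotv_ge0 //.
by rewrite ler_sqrtC ?nnegrE ?mulr_ge0 ?exprn_ge0 ?dotv_ge0.
Qed.

Theorem lemma1 (n : nat) (E : rel 'I_n) (w : 'I_n -> 'I_n -> algC)
  (hE : simple_graph E) (hstar : star_graph E)
  (hw : forall i j : 'I_n, is_edge E i j -> 0 <= w i j) :
  opnorm_le (hamiltonian E w) (max_weight E w + sum_weight E w).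
Proof.
have [_ [c starE]] := hstar. (* [hE] is implied by [hstar]. *)
have K0 : 0 <= max_weight E w + sum_weight E w.
  by rewrite addr_ge0 ?max_weight_ge0 // sum_weightE sumr_ge0 // => p; apply: hw.
apply: opnorm_le_dotv => // v.
pose s p := qswap c (leaf c p).
have Hv : qapply (hamiltonian E w) v =1 vdiff_sum (edges E) (fun p => w p.1 p.2) s v.
  move=> x; rewrite qapply_hamiltonian; apply: eq_bigr => p Ep.
  by rewrite /vdiff (star_qswap starE).
rewrite (eq_dotv Hv Hv); apply: dotv_le_sqr => //.
rewrite sum_weightE; apply: dotv_weighted_vdiff_le => [p Ep|p|p q Ep Eq pq].
- by rewrite hw ?le_max_weight.
- exact: qswapK.
- exists (qswap (leaf c p) (leaf c q)) => [|x]; first exact: qswapK.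
  have lp := star_leaf_neq starE _ Ep; have lq := star_leaf_neq starE _ Eq.
  apply: qswap_cycle3; [by rewrite eq_sym | by rewrite eq_sym |].
  by apply: contra pq => /eqP lpq; rewrite (star_leaf_inj starE Ep Eq lpq).
Qed.
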